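(* For every $\varepsilon>0$, the Pruned Plurality Veto rule with parameter $\varepsilon$ has metric distortion at most $9+\varepsilon$ and utilitarian distortion at most $\frac{(6+\varepsilon)m^2}{\varepsilon}=O(m^2/\varepsilon)$.
   Context: Setting: $\mathcal N$ is a set of $n$ agents and $\mathcal A$ a set of $m$ alternatives; each agent $i$ has a strict ranking $\sigma_i$ of $\mathcal A$, $X\succ_i Y$ meaning $i$ ranks $X$ above $Y$; the plurality score $\mathrm{plu}(X,\vec\sigma)$ is the number of agents ranking $X$ first. Metric framework: a pseudometric $d$ on $\mathcal N\cup\mathcal A$ is consistent with $\vec\sigma$ if $X\succ_iY\Rightarrow d(i,X)\le d(i,Y)$; $\mathrm{SC}(X,d)=\sum_i d(i,X)$; metric distortion of a rule $f$ is $\sup_{\vec\sigma}\sup_{d\text{ consistent}}\mathbb E_{X\sim f(\vec\sigma)}[\mathrm{SC}(X,d)]/\min_X\mathrm{SC}(X,d)$. Utilitarian framework: $u_i:\mathcal A\to\mathbb R_{\ge0}$ with $\sum_X u_i(X)=1$, consistent with $\vec\sigma$ if $X\succ_iY\Rightarrow u_i(X)\ge u_i(Y)$; $\mathrm{SW}(X,\vec u)=\sum_iu_i(X)$; utilitarian distortion of $f$ is $\sup_{\vec\sigma}\sup_{\vec u\text{ consistent}}\max_X\mathrm{SW}(X,\vec u)/\mathbb E_{X\sim f(\vec\sigma)}[\mathrm{SW}(X,\vec u)]$. Plurality Veto: initialize $\mathrm{score}(X)=\mathrm{plu}(X,\vec\sigma)$; let $S$ be the alternatives with positive score; process agents in a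 fixed order, each agent decrementing the score of her lowest-ranked alternative in $S$ and removing it from $S$ if its score hits $0$; output the last alternative removed. (Plurality Veto is known to have metric distortion $3$.) Pruned Plurality Veto with parameter $\varepsilon>0$: compute $\mathcal A'=\{X:\mathrm{plu}(X,\vec\sigma)\ge \frac{\varepsilon n}{(6+\varepsilon)m}\}$ (nonempty), restrict every ranking to $\mathcal A'$, and output the result of Plurality Veto on the restricted profile. *)

From HB Require Import structures.
From mathcomp Require Import all_boot all_order all_algebra.
From mathcomp Require Import perm reals.
Set Implicit Arguments. Unset Strict Implicit. Unset Printing Implicit Defensive.
Import Order.TTheory GRing.Theory Num.Theory.

(* Agents are 'I_n (processed by Plurality Veto in the order 0,1,...,n-1),
   alternatives are 'I_m.  A profile gives for each agent a strict ranking of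
   the alternatives, encoded as a permutation mapping each alternative to its
   position (0 = top). *)
Definition profile (n m : nat) := 'I_n -> {perm 'I_m}.

Section Voting.
Variables (n m : nat) (s : profile n m).

Definition prefers (i : 'I_n) (X Y : 'I_m) : bool := (s i X < s i Y)%N.

Definition top_in (A : {set 'I_m}) (i : 'I_n) : option 'I_m :=
  [pick X in A | [forall Y in A, (s i X <= s i Y)%N]].

Definition lowest_in (Sc : {set 'I_m}) (i : 'I_n) : option 'I_m :=
  [pick X in Sc | [forall Y in Sc, (s i Y <= s i X)%N]].

Definition plu_in (A : {set 'I_m}) (X : 'I_m) : nat :=
  #|[set i | top_in A i == Some X]|.

Definition plu (X : 'I_m) : nat := plu_in [set: 'I_m] X.

(* state: scores, current set Sc, last removed alternative *)
Definition pv_state := ({ffun 'I_m -> nat} * {set 'I_m} * option 'I_m)%type.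

Definition pv_step (st : pv_state) (i : 'I_n) : pv_state :=
  let: (sc, Sc, last) := st in
  match lowest_in Sc i with
  | Some X =>
      let sc' := [ffun Y => if Y == X then (sc X).-1 else sc Y] in
      if sc' X == 0%N then (sc', Sc :\ X, Some X) else (sc', Sc, last)
  | None => st
  end.

Definition plurality_veto_on (A : {set 'I_m}) : option 'I_m :=
  let sc0 := [ffun X => if X \in A then plu_in A X else 0%N] in
  let S0 := [set X in A | (0 < plu_in A X)%N] in
  (foldl pv_step (sc0, S0, None) (enum 'I_n)).2.

Definition plurality_veto : option 'I_m := plurality_veto_on [set: 'I_m].

Local Open Scope ring_scope.

Definition pruned_set {R : realType} (eps : R) : {set 'I_m} :=
  [set X | eps * n%:R / ((6 + eps) * m%:R) <= (plu X)%:R].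

Definition pruned_plurality_veto {R : realType} (eps : R) : option 'I_m :=
  plurality_veto_on (pruned_set eps).

Definition is_pseudometric {R : realType}
    (d : 'I_n + 'I_m -> 'I_n + 'I_m -> R) : Prop :=
  (forall x, d x x = 0) /\ (forall x y, 0 <= d x y) /\
  (forall x y, d x y = d y x) /\
  (forall x y z, d x z <= d x y + d y z).

Definition metric_consistent {R : realType}
    (d : 'I_n + 'I_m -> 'I_n + 'I_m -> R) : Prop :=
  forall i X Y, prefers i X Y -> d (inl i) (inr X) <= d (inl i) (inr Y).

Definition SC {R : realType} (d : 'I_n + 'I_m -> 'I_n + 'I_m -> R)
    (X : 'I_m) : R := \sum_(i < n) d (inl i) (inr X).

Definition is_unit_sum_utility {R : realType} (u : 'I_n -> 'I_m -> R) : Prop :=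
  forall i, (forall X, 0 <= u i X) /\ \sum_(X < m) u i X = 1.

Definition utility_consistent {R : realType} (u : 'I_n -> 'I_m -> R) : Prop :=
  forall i X Y, prefers i X Y -> u i Y <= u i X.

Definition SW {R : realType} (u : 'I_n -> 'I_m -> R) (X : 'I_m) : R :=
  \sum_(i < n) u i X.

End Voting.

From HB Require Import structures.
From mathcomp Require Import all_boot all_order all_algebra.
From mathcomp Require Import perm reals ring lra.
Import Order.TTheory GRing.Theory Num.Theory.
Set Implicit Arguments. Unset Strict Implicit. Unset Printing Implicit Defensive.
Local Open Scope ring_scope.

(* The argument rests on one property of Plurality Veto (pv_run, packaged as
   plurality_veto_on_spec): whenever an agent vetoes an alternative c, the
   eventual winner W is still alive, so that agent ranks W weakly above c; and
   every initial plurality point is vetoed exactly once.  Hence, for costs with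
   g i Y <= h i + f c whenever agent i ranks Y weakly above c,
       sum_i g i W  <=  sum_i h i + sum_c plu'(c) f c,
   where plu' is the plurality score of the profile the rule runs on.

   Pruning keeps the alternatives with at least t = eps n / ((6 + eps) m)
   plurality votes, so the pruned set A is nonempty and all but eps n/(6+eps)
   agents have their top choice in A (section Pruning).
   - Metric: with g = d(i,.), h = d(i,X), f = d(X,.) the property gives
     SC(W) <= SC(X) + sum_i d(X, top_A(i)).  Each term is at most
     2 d(i,X) + d(X,Y), where Y in A is the top choice of the agent closest to
     X among those whose top choice lies in A; this yields
     SC(W) <= (5 + eps/3) SC(X) <= (9 + eps) SC(X) (section Metric).
   - Utilitarian: the winner lies in A, so it has at least t supporters, each
     giving it utility at least 1/m, while any SW(X) is at most n
     (section Utilitarian). *)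


Lemma sum_by_fibers (V : nmodType) (I J : finType) (f : J -> V) (t : I -> J) :
  \sum_i f (t i) = \sum_c f c *+ #|[set i | t i == c]|.
Proof.
under [RHS]eq_bigr => c _ do rewrite -sumr_const.
transitivity (\sum_i \sum_c (if t i == c then f c else 0)).
  apply: eq_bigr => i _; rewrite -big_mkcond /=.
  by rewrite (eq_bigl (pred1 (t i))) ?big_pred1_eq // => c; rewrite /= eq_sym.
rewrite exchange_big; apply: eq_bigr => c _.
by rewrite [RHS]big_mkcond; apply: eq_bigr => i _; rewrite inE.
Qed.

Section Rankings.
Variables (n m : nat) (s : profile n m).

(* Positions are distinct, so a weakly better position is the same
   alternative or a strictly preferred one. *)
Lemma weak_prefers i Y Z : (s i Y <= s i Z)%N -> Y = Z \/ prefers s i Y Z.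
Proof.
rewrite leq_eqVlt => /orP[/eqP eq_pos|]; last by right.
by left; apply: (@perm_inj _ (s i)); apply: val_inj.
Qed.

Lemma top_inP A i t : top_in s A i = Some t ->
  t \in A /\ forall Y, Y \in A -> (s i t <= s i Y)%N.
Proof.
by rewrite /top_in; case: pickP => // t' /andP[t'A /forall_inP t'_top] [<-].
Qed.

Lemma top_in_some A i : A != set0 -> exists t, top_in s A i = Some t.
Proof.
case/set0Pn=> X XA; rewrite /top_in; case: pickP => [t _|none]; first by exists t.
have [t tA t_min] := arg_minnP (fun Y => s i Y) XA.
by have := none t; rewrite [t \in A]tA => /negbT/negP[]; apply/forall_inP.
Qed.

Lemma lowest_inP S i c : lowest_in s S i = Some c ->
  c \in S /\ forall Y, Y \in S -> (s i Y <= s i c)%N.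
Proof.
by rewrite /lowest_in; case: pickP => // c' /andP[c'S /forall_inP c'_low] [<-].
Qed.

Lemma lowest_in_some S i : S != set0 -> exists c, lowest_in s S i = Some c.
Proof.
case/set0Pn=> X XS; rewrite /lowest_in; case: pickP => [c _|none]; first by exists c.
have [c cS c_max] := arg_maxnP (fun Y => s i Y) XS.
by have := none c; rewrite [c \in S]cS => /negbT/negP[]; apply/forall_inP.
Qed.

Lemma tops_exist A : A != set0 ->
  exists t : 'I_n -> 'I_m, forall i, top_in s A i = Some (t i).
Proof.
move=> A_nz; have [X0 _] := set0Pn _ A_nz.
exists (fun i => odflt X0 (top_in s A i)) => i.
by have [t ->] := top_in_some i A_nz.
Qed.

Lemma plu_in_fibers A t X : (forall i, top_in s A i = Some (t i)) ->
  plu_in s A X = #|[set i | t i == X]|.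
Proof. by move=> tops; apply: eq_card => i; rewrite !inE tops. Qed.

Lemma weighted_plu_in (V : nmodType) A t (f : 'I_m -> V) :
  (forall i, top_in s A i = Some (t i)) ->
  \sum_X f X *+ plu_in s A X = \sum_i f (t i).
Proof.
move=> tops; rewrite sum_by_fibers.
by apply: eq_bigr => X _; rewrite (plu_in_fibers X tops).
Qed.

Lemma sum_plu_in A : A != set0 -> (\sum_X plu_in s A X)%N = n.
Proof.
case/tops_exist=> t tops.
transitivity (\sum_X (1 : nat) *+ plu_in s A X).
  by apply: eq_bigr => X _; rewrite natn.
by rewrite (weighted_plu_in _ tops) sumr_const card_ord natn.
Qed.

Lemma plu_in_out (A : {set 'I_m}) X : X \notin A -> plu_in s A X = 0%N.
Proof.
move=> XA; apply/eqP; rewrite cards_eq0; apply/eqP/setP => i; rewrite !inE.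
by apply/negbTE; apply: contra XA => /eqP/top_inP[].
Qed.

End Rankings.

Section PluralityVeto.
Variables (n m : nat) (s : profile n m).

(* Invariant of a run: the alternatives still alive are exactly those with a
   positive score. *)
Definition alive_support (sc : {ffun 'I_m -> nat}) (S : {set 'I_m}) : Prop :=
  forall X, (X \in S) = (0 < sc X)%N.

Definition veto (sc : {ffun 'I_m -> nat}) (c : 'I_m) : {ffun 'I_m -> nat} :=
  [ffun Y => if Y == c then (sc c).-1 else sc Y].

Definition survivors (sc : {ffun 'I_m -> nat}) (S : {set 'I_m}) (c : 'I_m) :
  {set 'I_m} := if veto sc c c == 0%N then S :\ c else S.

Lemma vetoE (sc : {ffun 'I_m -> nat}) c Y :
  veto sc c Y = if Y == c then (sc c).-1 else sc Y.
Proof. by rewrite ffunE. Qed.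

Lemma veto_weighted (V : nmodType) (f : 'I_m -> V) (sc : {ffun 'I_m -> nat}) c :
  (0 < sc c)%N ->
  \sum_X f X *+ sc X = f c + \sum_X f X *+ veto sc c X.
Proof.
move=> sc_c; rewrite (bigD1 c) //= [in RHS](bigD1 c) //= vetoE eqxx addrA.
congr (_ + _); last by apply: eq_bigr => X /negbTE XC; rewrite vetoE XC.
by rewrite -mulrS prednK.
Qed.

Lemma veto_total (sc : {ffun 'I_m -> nat}) c : (0 < sc c)%N ->
  (\sum_X sc X)%N = (\sum_X veto sc c X).+1.
Proof.
move=> sc_c; rewrite (bigD1 c) //= [in RHS](bigD1 c) //= vetoE eqxx.
rewrite -[in LHS](prednK sc_c) addSn; congr (_ + _).+1.
by apply: eq_bigr => X /negbTE XC; rewrite vetoE XC.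
Qed.

Lemma veto_alive sc S c : alive_support sc S -> c \in S ->
  alive_support (veto sc c) (survivors sc S c).
Proof.
move=> supp cS X; have vc : veto sc c c = (sc c).-1 by rewrite vetoE eqxx.
rewrite /survivors vc vetoE; case: (X =P c) => [->|/eqP XC].
  by case: eqP => [->|/eqP nz]; rewrite ?inE ?eqxx // cS lt0n.
by rewrite -supp; case: ifP => _; rewrite // !inE XC.
Qed.

Lemma survivors_sub sc S c : survivors sc S c \subset S.
Proof. by rewrite /survivors; case: ifP => _; rewrite ?subD1set. Qed.

Lemma pv_first_veto i sc S o : alive_support sc S -> (0 < \sum_X sc X)%N ->
  exists2 c, pv_step s (sc, S, o) i =
      (veto sc c, survivors sc S c, if veto sc c c == 0%N then Some c else o) &
    c \in S /\ forall W, W \in S -> (s i W <= s i c)%N.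
Proof.
move=> supp sum_gt0.
have S_nz : S != set0.
  apply/set0Pn; case: (pickP (fun X => 0 < sc X)%N) => [X scX|none].
    by exists X; rewrite supp.
  by move: sum_gt0; rewrite big1 // => X _; apply/eqP; rewrite -leqn0 leqNgt none.
have [c low] := lowest_in_some s i S_nz.
exists c; last exact: lowest_inP low.
by rewrite /pv_step low /survivors; case: ifP.
Qed.

(* The premise under which Plurality Veto controls a cost g: agent i's cost of
   any alternative it ranks weakly above c is at most h i + f c. *)
Definition veto_compatible (R : numDomainType)
    (g : 'I_n -> 'I_m -> R) (h : 'I_n -> R) (f : 'I_m -> R) : Prop :=
  forall i Y c, (s i Y <= s i c)%N -> g i Y <= h i + f c.

(* Main invariant, by induction on the remaining agents: when an agent vetoes
   c, the eventual winner is still alive, hence ranked weakly above c. *)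
Lemma pv_run (R : numDomainType) i l sc S o :
  alive_support sc S -> (\sum_X sc X)%N = (size l).+1 ->
  exists W, [/\ (foldl (pv_step s) (sc, S, o) (i :: l)).2 = Some W, W \in S &
    forall g h f, @veto_compatible R g h f ->
      \sum_(j <- i :: l) g j W <= \sum_(j <- i :: l) h j + \sum_X f X *+ sc X].
Proof.
elim: l i sc S o => [|j l IH] i sc S o supp total;
  have [|c step [cS c_low]] := pv_first_veto i o supp; rewrite ?total //;
  have sc_c : (0 < sc c)%N by [rewrite -supp].
- (* the last agent vetoes the last point, eliminating c, which thus wins *)
  have veto0 X : veto sc c X = 0%N.
    have := veto_total sc_c; rewrite total => -[/esym/eqP].
    by rewrite sum_nat_eq0 => /forallP/(_ X)/eqP.
  have -> : (foldl (pv_step s) (sc, S, o) [:: i]).2 = (pv_step s (sc, S, o) i).2 by [].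
  exists c; rewrite step veto0 eqxx; split => // g h f compat.
  rewrite !big_seq1 (veto_weighted f sc_c) big1 => [|X _]; last by rewrite veto0.
  by rewrite addr0; apply: compat.
- (* the winner of the remaining run survived the veto of agent i *)
  have total' : (\sum_X veto sc c X)%N = (size l).+1.
    by apply: succn_inj; rewrite -veto_total.
  have -> : foldl (pv_step s) (sc, S, o) [:: i, j & l] =
            foldl (pv_step s) (pv_step s (sc, S, o) i) (j :: l) by [].
  have [W [run WS bound]] := IH j _ _ (if veto sc c c == 0%N then Some c else o)
    (veto_alive supp cS) total'.
  exists W; rewrite step; split => //; first exact: (subsetP (survivors_sub sc S c)).
  move=> g h f compat; rewrite big_cons [in X in _ <= X]big_cons.
  rewrite (veto_weighted f sc_c) addrACA.
  apply: lerD; last exact: bound.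
  by apply/compat/c_low/(subsetP (survivors_sub sc S c)).
Qed.

Lemma plurality_veto_on_spec (R : numDomainType) A : (0 < n)%N -> A != set0 ->
  exists W, [/\ plurality_veto_on s A = Some W, W \in A &
    forall g h f, @veto_compatible R g h f ->
      \sum_i g i W <= \sum_i h i + \sum_X f X *+ plu_in s A X].
Proof.
move=> n_gt0 A_nz.
set sc0 : {ffun 'I_m -> nat} := [ffun X => if X \in A then plu_in s A X else 0%N].
have sc0E X : sc0 X = plu_in s A X by rewrite ffunE; case: ifPn => // /plu_in_out ->.
have supp : alive_support sc0 [set X in A | (0 < plu_in s A X)%N].
  by move=> X; rewrite inE sc0E; case: (boolP (X \in A)) => // /plu_in_out ->.
have [i [l enumE]] : exists i l, enum 'I_n = i :: l.
  case: (enum 'I_n) (size_enum_ord n) => [n0|i l _]; last by exists i, l.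
  by rewrite -n0 in n_gt0.
have total : (\sum_X sc0 X)%N = (size l).+1.
  by under eq_bigr do rewrite sc0E; rewrite sum_plu_in // -[LHS](size_enum_ord n) enumE.
have [W [run WS bound]] := pv_run R i None supp total.
exists W; split; first by rewrite /plurality_veto_on enumE.
  by move: WS; rewrite inE => /andP[].
move=> g h f compat; have := bound g h f compat.
have -> : \sum_X f X *+ sc0 X = \sum_X f X *+ plu_in s A X.
  by apply: eq_bigr => X _; rewrite sc0E.
by rewrite -enumE !big_enum.
Qed.

End PluralityVeto.

Section Pruning.
Variables (R : realType) (n m : nat) (s : profile n m) (eps : R).
Hypotheses (eps_gt0 : 0 < eps) (m_gt0 : (0 < m)%N).

Local Notation threshold := (eps * n%:R / ((6 + eps) * m%:R)).

Lemma threshold_ge0 : 0 <= threshold.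
Proof. by rewrite divr_ge0 ?mulr_ge0 ?ler0n ?ltW ?addr_gt0. Qed.

(* The threshold is chosen so that m alternatives below it gather fewer than
   eps n / (6 + eps) votes. *)
Lemma threshold_budget : threshold *+ m = eps * n%:R / (6 + eps).
Proof.
have m_neq0 : m%:R != 0 :> R by rewrite pnatr_eq0 -lt0n.
have e6_neq0 : 6 + eps != 0 by rewrite gt_eqF ?addr_gt0.
by rewrite -mulr_natr; field; apply/andP.
Qed.

Lemma plu_sum : \sum_X (plu s X)%:R = n%:R :> R.
Proof.
rewrite -natr_sum /plu sum_plu_in //; apply/set0Pn.
by exists (Ordinal m_gt0); rewrite inE.
Qed.

Lemma pruned_away_plu :
  \sum_(X | X \notin pruned_set s eps) (plu s X)%:R <= eps * n%:R / (6 + eps).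
Proof.
rewrite -threshold_budget -[X in _ *+ X](card_ord m) -sumr_const big_mkcond /=.
apply: ler_sum => X _; case: ifPn => [|_]; last exact: threshold_ge0.
by rewrite inE -ltNge => /ltW.
Qed.

(* Pruning never removes everything: the removed alternatives hold fewer than
   n votes in total. *)
Lemma pruned_set_nonempty : (0 < n)%N -> pruned_set s eps != set0.
Proof.
move=> n_gt0; apply/negP => /eqP pruned0; have := pruned_away_plu.
rewrite pruned0 (eq_bigl predT) ?plu_sum => [|X]; last by rewrite in_set0.
rewrite ler_pdivlMr ?addr_gt0 // => le_n.
have : 0 < n%:R :> R by rewrite ltr0n.
nra.
Qed.

Lemma pruned_supporters t : (forall i, top_in s setT i = Some (t i)) ->
  6 * n%:R <= (6 + eps) * #|[set i | t i \in pruned_set s eps]|%:R.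
Proof.
move=> tops; set G := [set i | t i \in pruned_set s eps].
have outside : #|~: G|%:R = \sum_(X | X \notin pruned_set s eps) (plu s X)%:R :> R.
  have -> : #|~: G|%:R = \sum_i (if t i \in pruned_set s eps then 0 else 1) :> R.
    by rewrite -sumr_const big_mkcond; apply: eq_bigr => i _; rewrite !inE if_neg.
  rewrite (sum_by_fibers (fun X => if X \in pruned_set s eps then 0 else 1)).
  rewrite [RHS]big_mkcond; apply: eq_bigr => X _.
  by rewrite /plu (plu_in_fibers X tops); case: ifP => _ //; exact: mul0rn.
have := pruned_away_plu; rewrite -outside ler_pdivlMr ?addr_gt0 // => le_out.
have : (#|G| + #|~: G|)%:R = n%:R :> R by rewrite cardsC card_ord.
rewrite natrD; nra.
Qed.

End Pruning.

Section Metric.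
Variables (R : realType) (n m : nat) (s : profile n m).
Variable d : 'I_n + 'I_m -> 'I_n + 'I_m -> R.
Hypotheses (d_metric : is_pseudometric d) (d_cons : metric_consistent s d).

Let d_ge0 : forall x y, 0 <= d x y := proj1 (proj2 d_metric).
Let d_sym : forall x y, d x y = d y x := proj1 (proj2 (proj2 d_metric)).
Let d_tri : forall x y z, d x z <= d x y + d y z := proj2 (proj2 (proj2 d_metric)).

Lemma dist_mono i Y Z : (s i Y <= s i Z)%N -> d (inl i) (inr Y) <= d (inl i) (inr Z).
Proof. by case/weak_prefers => [->|/d_cons]. Qed.

(* Distances satisfy the premise of pv_run: by the triangle inequality through
   X, d(i,Y) <= d(i,c) <= d(i,X) + d(X,c) when i ranks Y weakly above c. *)
Lemma metric_veto_compatible X :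
  veto_compatible s (fun i Y => d (inl i) (inr Y)) (fun i => d (inl i) (inr X))
    (fun c => d (inr X) (inr c)).
Proof. by move=> i Y c /dist_mono le_Yc; apply: le_trans le_Yc (d_tri _ _ _). Qed.

(* If every agent's top choice tA i in A is ranked above Y in A, then
   d(X, tA i) <= d(X,i) + d(i,Y) <= 2 d(i,X) + d(X,Y). *)
Lemma restricted_tops_cost (A : {set 'I_m}) tA X Y :
  (forall i Z, Z \in A -> (s i (tA i) <= s i Z)%N) -> Y \in A ->
  \sum_i d (inr X) (inr (tA i)) <= SC d X + SC d X + n%:R * d (inr X) (inr Y).
Proof.
move=> tA_top YA.
have each i : d (inr X) (inr (tA i)) <=
    d (inl i) (inr X) + d (inl i) (inr X) + d (inr X) (inr Y).
  apply: le_trans (d_tri _ (inl i) _) _; rewrite d_sym -addrA lerD //.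
  by apply: le_trans (dist_mono (tA_top i Y YA)) _; exact: d_tri.
apply: le_trans (ler_sum _ (fun i _ => each i)) _.
by rewrite !big_split /= sumr_const card_ord mulr_natl.
Qed.

(* Let G be the agents whose top choice t i lies in A.  The top choice of the
   member of G closest to X is an alternative of A at distance at most
   2 SC(X) / |G| from X. *)
Lemma close_top_choice (A : {set 'I_m}) t X :
  (forall i Z, (s i (t i) <= s i Z)%N) -> [set i | t i \in A] != set0 ->
  exists2 Y, Y \in A &
    #|[set i | t i \in A]|%:R * d (inr X) (inr Y) <= SC d X + SC d X.
Proof.
move=> t_top; set G := [set i | t i \in A]; case/set0Pn=> i1 i1G.
have [j jG j_min] := arg_minP (fun i => d (inl i) (inr X)) i1G.
exists (t j); first by have : j \in G := jG; rewrite inE.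
set D := d (inl j) (inr X).
have GD : #|G|%:R * D <= SC d X.
  rewrite mulr_natl -sumr_const /SC [X in _ <= X](bigID (mem G)) /= -[X in X <= _]addr0.
  by apply: lerD; [apply: ler_sum => i /j_min | apply: sumr_ge0 => i _].
have XY : d (inr X) (inr (t j)) <= D + D.
  apply: le_trans (d_tri _ (inl j) _) _; rewrite d_sym lerD //; exact: dist_mono.
apply: le_trans (ler_wpM2l (ler0n _ _) XY) _.
by rewrite mulrDr lerD.
Qed.

(* The metric bound: the Plurality Veto inequality on the pruned profile, with
   at least a 6/(6 + eps) fraction of the agents supporting A, gives
   SC(W) <= SC(X) + 2 SC(X) + (2 + eps/3) SC(X). *)
Lemma metric_distortion_bound (eps : R) (A : {set 'I_m}) t tA W X :
  0 < eps -> (0 < n)%N ->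
  (forall i Z, (s i (t i) <= s i Z)%N) ->
  (forall i Z, Z \in A -> (s i (tA i) <= s i Z)%N) ->
  6 * n%:R <= (6 + eps) * #|[set i | t i \in A]|%:R ->
  SC d W <= SC d X + \sum_i d (inr X) (inr (tA i)) ->
  SC d W <= (9 + eps) * SC d X.
Proof.
move=> eps_gt0 n_gt0 t_top tA_top supporters pv.
have G_nz : [set i | t i \in A] != set0.
  rewrite -card_gt0; apply: contraTT supporters; rewrite -leqNgt leqn0 => /eqP ->.
  by rewrite mulr0 -ltNge pmulr_rgt0 ?ltr0n.
have [Y YA close] := close_top_choice X t_top G_nz.
have tops_cost := restricted_tops_cost X tA_top YA.
have SC_ge0 : 0 <= SC d X by apply: sumr_ge0.
have scaled := ler_wpM2r (d_ge0 (inr X) (inr Y)) supporters.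
nra.
Qed.

End Metric.

Section Utilitarian.
Variables (R : realType) (n m : nat) (s : profile n m) (u : 'I_n -> 'I_m -> R).
Hypotheses (u_unit : is_unit_sum_utility u) (u_cons : utility_consistent s u).

Lemma utility_mono i Y Z : (s i Y <= s i Z)%N -> u i Z <= u i Y.
Proof. by case/weak_prefers => [->|/u_cons]. Qed.

(* Every agent distributes total utility 1, so no welfare exceeds n. *)
Lemma SW_le_n X : SW u X <= n%:R.
Proof.
rewrite /SW -[X in X%:R]card_ord -sumr_const; apply: ler_sum => i _.
have [u_ge0 u_sum] := u_unit i; rewrite -u_sum (bigD1 X) //= lerDl.
exact: sumr_ge0.
Qed.

(* A supporter of W values W at least as much as any alternative, hence at
   least 1/m. *)
Lemma plu_le_SW t W : (forall i, top_in s setT i = Some (t i)) ->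
  (plu s W)%:R <= m%:R * SW u W.
Proof.
move=> tops; rewrite /plu (plu_in_fibers W tops) -sumr_const /SW mulr_sumr.
rewrite [X in _ <= X](bigID (mem [set i | t i == W])) /= -[X in X <= _]addr0.
apply: lerD; last by apply: sumr_ge0 => i _; rewrite mulr_ge0 ?ler0n ?(u_unit i).1.
apply: ler_sum => i; rewrite inE => /eqP tW.
rewrite mulr_natl -(u_unit i).2 -[X in _ *+ X]card_ord -sumr_const.
apply: ler_sum => Y _; apply: utility_mono; rewrite -tW.
exact: (top_inP (tops i)).2 _ (in_setT Y).
Qed.

(* An alternative surviving pruning has at least eps n / ((6 + eps) m)
   supporters, so m SW(W) is at least that much, while SW(X) <= n. *)
Lemma utilitarian_distortion_bound (eps : R) t W X :
  0 < eps -> (0 < m)%N -> (forall i, top_in s setT i = Some (t i)) ->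
  W \in pruned_set s eps -> SW u X <= (6 + eps) * m%:R ^+ 2 / eps * SW u W.
Proof.
move=> eps_gt0 m_gt0 tops; rewrite inE => W_pruned.
have m_neq0 : m%:R != 0 :> R by rewrite pnatr_eq0 -lt0n.
have e6_gt0 : 0 < 6 + eps by rewrite addr_gt0.
have -> : (6 + eps) * m%:R ^+ 2 / eps * SW u W = (6 + eps) * m%:R / eps * (m%:R * SW u W).
  by rewrite expr2; field; rewrite gt_eqF.
apply: le_trans (SW_le_n X) _.
have -> : n%:R = (6 + eps) * m%:R / eps * (eps * n%:R / ((6 + eps) * m%:R)) :> R.
  by field; rewrite m_neq0 !gt_eqF.
apply: ler_wpM2l.
  by rewrite divr_ge0 ?mulr_ge0 ?ler0n ?ltW.
exact: le_trans W_pruned (plu_le_SW W tops).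
Qed.

End Utilitarian.

Theorem mainTheorem3 (R : realType) (n m : nat) (eps : R) :
  0 < eps -> (0 < n)%N -> (0 < m)%N ->
  forall s : profile n m,
  exists W : 'I_m,
    pruned_plurality_veto s eps = Some W /\
    (* metric distortion at most 9 + eps *)
    (forall d : 'I_n + 'I_m -> 'I_n + 'I_m -> R,
       is_pseudometric d -> metric_consistent s d ->
       forall X : 'I_m, SC d W <= (9 + eps) * SC d X) /\
    (* utilitarian distortion at most (6 + eps) m^2 / eps *)
    (forall u : 'I_n -> 'I_m -> R,
       is_unit_sum_utility u -> utility_consistent s u ->
       forall X : 'I_m, SW u X <= (6 + eps) * (m%:R) ^+ 2 / eps * SW u W).
Proof.
move=> eps_gt0 n_gt0 m_gt0 s.
have [t tops] : exists t, forall i, top_in s setT i = Some (t i).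
  by apply: (tops_exist s); apply/set0Pn; exists (Ordinal m_gt0); rewrite inE.
have t_top i Z : (s i (t i) <= s i Z)%N by exact: (top_inP (tops i)).2 _ (in_setT Z).
have A_nz := pruned_set_nonempty s eps_gt0 m_gt0 n_gt0.
have [tA topsA] := tops_exist s A_nz.
have [W [run WA pv_bound]] := plurality_veto_on_spec s R n_gt0 A_nz.
exists W; split=> //; split=> [d d_metric d_cons X | u u_unit u_cons X].
- have pv := pv_bound _ _ _ (metric_veto_compatible d_metric d_cons X).
  rewrite (weighted_plu_in _ topsA) in pv.
  apply: (metric_distortion_bound d_metric d_cons eps_gt0 n_gt0 t_top _
    (pruned_supporters eps_gt0 m_gt0 tops) pv).
  by move=> i; exact: (top_inP (topsA i)).2.
- exact: (utilitarian_distortion_bound u_unit u_cons X eps_gt0 m_gt0 tops WA).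
Qed.
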